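(* Let $w\ge 1$ and let $G$ be a graph of modular width at most $w$. Then every shortest path in $G$ has length at most $w$. Moreover, if $|V(G)|>w$ and $V_1,\dots,V_r$ ($r\le w$) is a modular decomposition of $G$, then every shortest path in $G$ of length at least three is either fully contained in some $G[V_i]$, or contains at most one vertex from each $V_i$, $i\in[r]$.
   Context: All graphs are finite, simple and undirected; the length of a path is its number of edges. A module of $G$ is a set $M\subseteq V(G)$ such that for all $u,v\in M$ and $x\in V(G)\setminus M$, $\{u,x\}\in E(G)$ implies $\{v,x\}\in E(G)$. A graph $G$ has modular width at most $w$ if either $|V(G)|\le w$, or there is a partition of $V(G)$ into at most $w$ sets $V_1,\dots,V_r$ such that each $V_i$ is a module of $G$ and each $G[V_i]$ has modular width at most $w$. A modular decomposition of $G$ (with respect to $w$) is a non-trivial partition of $V(G)$ into at most $w$ sets $V_1,\dots,V_r$, each a module of $G$ with $G[V_i]$ of modular width at most $w$. *)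

From mathcomp Require Import all_boot.
Set Implicit Arguments. Unset Strict Implicit. Unset Printing Implicit Defensive.

Section Graphs.
Variables (T : finType) (e : rel T).

Definition simple_graph : Prop := symmetric e /\ irreflexive e.

Definition is_module (S M : {set T}) : Prop :=
  M \subset S /\
  forall u v x, u \in M -> v \in M -> x \in S :\: M -> e u x -> e v x.

(* mw_le w S : the induced subgraph G[S] has modular width at most w. *)
Inductive mw_le (w : nat) : {set T} -> Prop :=
  | mw_small (S : {set T}) : #|S| <= w -> mw_le w S
  | mw_split (S : {set T}) (P : {set {set T}}) :
      partition P S -> #|P| <= w ->
      (forall V, V \in P -> is_module S V) ->
      (forall V, V \in P -> mw_le w V) ->
      mw_le w S.

Definition mw_graph_le (w : nat) : Prop := mw_le w [set: T].

Definition modular_decomposition (w : nat) (P : {set {set T}}) : Prop :=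
  partition P [set: T] /\ P != [set [set: T]] /\ #|P| <= w /\
  (forall V, V \in P -> is_module [set: T] V) /\
  (forall V, V \in P -> mw_le w V).

(* The path with vertex sequence x :: p (length = size p) is a shortest path
   of G: a path without repeated vertices, and no walk between its endpoints
   has fewer edges. *)
Definition shortest_path (x : T) (p : seq T) : Prop :=
  path e x p /\ uniq (x :: p) /\
  forall q, path e x q -> last x q = last x p -> size p <= size q.

End Graphs.

From mathcomp Require Import all_boot.
From mathcomp Require Import zify.
Set Implicit Arguments. Unset Strict Implicit. Unset Printing Implicit Defensive.

(* A shortest path has no chords: two of its vertices are adjacent only if
   they are consecutive on it.  Let M be a module containing two vertices of a
   shortest path of length at least three but not the whole path.  Where the
   path leaves M, some path vertex b outside M is adjacent to a path vertex in
   M, hence to all of M; so the path vertices in M are exactly the two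
   neighbours of b on the path.  As the path has length at least three, one of
   these has a further neighbour d on the path, which lies outside M and is
   therefore, by modularity, adjacent to the other one as well: a chord.
   Hence a shortest path of length at least three either stays inside a block
   of a modular partition, where induction applies, or meets every block at
   most once and so has at most w vertices. *)

Lemma last_take (T : Type) (x : T) p i :
  i <= size p -> last x (take i p) = nth x (x :: p) i.
Proof.
move=> ip; rewrite (last_nth x) size_takel //.
by rewrite -[x :: _]/(take i.+1 (x :: p)) nth_take.
Qed.

Lemma path_drop (T : Type) (e : rel T) x p i :
  path e x p -> i <= size p -> path e (nth x (x :: p) i) (drop i p).
Proof.
move=> pe ip; move: pe.
by rewrite -{1}(cat_take_drop i p) cat_path last_take // => /andP[].
Qed.

Lemma exists_nat_switch (f : nat -> bool) n i j :
  i <= n -> j <= n -> f i != f j -> exists2 t, t < n & f t != f t.+1.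
Proof.
move=> i_n j_n fij.
case: (boolP (has (fun t => f t != f t.+1) (iota 0 n))) => [/hasP[t] | /hasPn f_const].
  by rewrite mem_iota => /andP[_ tn] ft; exists t.
have f0 k : k <= n -> f k = f 0.
  elim: k => // k IH kn; rewrite -IH ?(ltnW kn) //; apply/esym/eqP/negbNE.
  by apply: f_const; rewrite mem_iota.
by rewrite f0 // (f0 j) ?eqxx in fij.
Qed.

Lemma count_le1_in (T : eqType) (a : pred T) s :
  uniq s -> {in s &, forall y z, a y -> a z -> y = z} -> count a s <= 1.
Proof.
move=> s_uniq a_inj; rewrite -size_filter.
case def_t : (filter a s) => [|y [|z t]] //.
have /andP[yz _] : uniq (y :: z :: t) by rewrite -def_t filter_uniq.
have /andP[ya ys] : a y && (y \in s) by rewrite -mem_filter def_t mem_head.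
have /andP[za zs] : a z && (z \in s) by rewrite -mem_filter def_t !inE eqxx orbT.
by move: yz; rewrite (a_inj y z) // mem_head.
Qed.

Lemma size_leq_card_pblock (T : finType) (P : {set {set T}}) s :
  uniq s -> {subset s <= cover P} -> {in s &, injective (pblock P)} ->
  size s <= #|P|.
Proof.
move=> s_uniq s_cover pblock_inj; rewrite -(size_map (pblock P)) cardE.
apply: uniq_leq_size; first by rewrite map_inj_in_uniq.
by move=> B /mapP[y ys ->]; rewrite mem_enum pblock_mem ?s_cover.
Qed.

Section ShortestPaths.
Variables (T : finType) (e : rel T).
Hypothesis e_sym : symmetric e.

Definition shortest_path_in (S : {set T}) (x : T) (p : seq T) : Prop :=
  [/\ all (fun y => y \in S) (x :: p), path e x p, uniq (x :: p) &
      forall q, all (fun y => y \in S) q -> path e x q ->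
        last x q = last x p -> size p <= size q].

Lemma shortest_path_in_setT x p :
  shortest_path e x p -> shortest_path_in [set: T] x p.
Proof.
case=> pe [p_uniq p_min]; split=> // [|q _]; last exact: p_min.
by apply/allP => y; rewrite inE.
Qed.

Lemma shortest_path_in_sub (S V : {set T}) x p :
  V \subset S -> all (fun y => y \in V) (x :: p) ->
  shortest_path_in S x p -> shortest_path_in V x p.
Proof.
move=> VS pV [_ pe p_uniq p_min]; split=> // q qV; apply: p_min.
by apply: sub_all qV => y; apply: (subsetP VS).
Qed.

Lemma shortest_path_in_card (S : {set T}) x p :
  shortest_path_in S x p -> size p < #|S|.
Proof.
case=> pS _ p_uniq _; change (size (x :: p) <= #|S|).
rewrite -(card_uniqP p_uniq); apply/subset_leq_card/subsetP => y.
exact: (allP pS).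
Qed.

Lemma shortest_path_in_mem S x p i :
  shortest_path_in S x p -> i <= size p -> nth x (x :: p) i \in S.
Proof. by case=> pS _ _ _ ip; apply: (allP pS); rewrite mem_nth. Qed.

Lemma shortest_path_in_chord S x p i j :
  shortest_path_in S x p -> i < j <= size p ->
  e (nth x (x :: p) i) (nth x (x :: p) j) -> j = i.+1.
Proof.
case=> pS pe _ p_min /andP[ij jp] e_ij; apply/eqP; rewrite eqn_leq ij andbT.
rewrite leqNgt; apply/negP => i2j.
have drop_j : drop j.-1 p = nth x (x :: p) j :: drop j p.
  by case: j ij jp {i2j e_ij} => // j' _ jp; rewrite (drop_nth x).
set q := take i p ++ drop j.-1 p.
suff : size p <= size q by rewrite size_cat size_takel ?size_drop; lia.
apply: p_min.
- apply/allP => y; rewrite mem_cat => /orP[/mem_take|/mem_drop] yp;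
  by apply: (allP pS); rewrite inE yp orbT.
- rewrite cat_path take_path // last_take ?drop_j /= ?e_ij ?path_drop //; lia.
- by rewrite /q last_cat drop_j -[in RHS](cat_take_drop j.-1 p) last_cat drop_j.
Qed.

Lemma shortest_path_in_adj S x p i j :
  shortest_path_in S x p -> i <= size p -> j <= size p ->
  e (nth x (x :: p) i) (nth x (x :: p) j) -> i <= j.+1 /\ j <= i.+1.
Proof.
move=> sp ip jp e_ij; case: (ltngtP i j) => [ij | ji | ->]; last by [].
- by have := shortest_path_in_chord sp _ e_ij; rewrite ij jp => /(_ isT) ->; lia.
- rewrite e_sym in e_ij.
  by have := shortest_path_in_chord sp _ e_ij; rewrite ji ip => /(_ isT) ->; lia.
Qed.

Lemma path_module_boundary (S M : {set T}) x p i l :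
  all (fun y => y \in S) (x :: p) -> path e x p -> is_module e S M ->
  i <= size p -> l <= size p ->
  nth x (x :: p) i \in M -> nth x (x :: p) l \notin M ->
  exists b, [/\ b <= size p, nth x (x :: p) b \notin M &
    forall k, k <= size p -> nth x (x :: p) k \in M ->
      e (nth x (x :: p) k) (nth x (x :: p) b)].
Proof.
set v := nth x (x :: p) => pS pe [_ modM] ip lp viM vlM.
have [t tp vt] : exists2 t, t < size p & (v t \in M) != (v t.+1 \in M).
  by apply: (exists_nat_switch ip lp); rewrite viM (negbTE vlM).
have e_t : e (v t) (v t.+1) by apply: (pathP x pe).
suff [a [b [ap bp vaM vbM e_ab]]] : exists a b, [/\ a <= size p, b <= size p,
    v a \in M, v b \notin M & e (v a) (v b)].
  exists b; split=> // k kp vkM; apply: (modM (v a)) => //.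
  by rewrite inE vbM (allP pS) ?mem_nth.
case vtM : (v t \in M) in vt.
- by exists t, t.+1; split; rewrite ?(ltnW tp) //; move: vt; case: (_ \in M).
- exists t.+1, t; split; rewrite ?(ltnW tp) ?vtM //; last by rewrite e_sym.
  by move: vt; case: (_ \in M).
Qed.

Lemma shortest_path_in_module S M x p i j :
  shortest_path_in S x p -> is_module e S M -> 3 <= size p ->
  ~~ all (fun y => y \in M) (x :: p) -> i < j <= size p ->
  nth x (x :: p) i \in M -> nth x (x :: p) j \notin M.
Proof.
set v := nth x (x :: p) => sp modM p3 /allPn[z zp zM] /andP[ij jp] viM.
apply/negP => vjM; have ip : i <= size p by lia.
have [pS pe _ _] := sp.
have [b [bp vbM b_adj]] : exists b, [/\ b <= size p, v b \notin M &
    forall k, k <= size p -> v k \in M -> e (v k) (v b)].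
  apply: (path_module_boundary pS pe modM ip _ viM (l := index z (x :: p))).
    by rewrite -ltnS index_mem.
  by rewrite nth_index.
have M_next_to_b k : k <= size p -> v k \in M -> k.+1 = b \/ k = b.+1.
  move=> kp vkM; have kb : k != b by apply: contraNneq vbM => <-.
  by have := shortest_path_in_adj sp kp bp (b_adj k kp vkM); lia.
have no_far_nbr d k : d <= size p -> k <= size p -> d.+2 = b \/ d = b.+2 ->
    v k \in M -> e (v k) (v d) -> False.
  move=> dp kp d_far vkM e_kd.
  have vdM : v d \in S :\: M.
    rewrite inE (shortest_path_in_mem sp dp) andbT; apply/negP.
    by move/(M_next_to_b d dp); lia.
  have := shortest_path_in_adj sp ip dp (modM.2 _ _ _ vkM viM vdM e_kd).
  have := shortest_path_in_adj sp jp dp (modM.2 _ _ _ vkM vjM vdM e_kd).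
  by have := M_next_to_b i ip viM; have := M_next_to_b j jp vjM; lia.
have := M_next_to_b i ip viM; have := M_next_to_b j jp vjM.
case: (ltnP j (size p)) => [jn | nj] bi bj.
- by apply: (no_far_nbr j.+1 j) => //; [lia | exact: (pathP x pe)].
- apply: (no_far_nbr i.-1 i) => //; [lia | lia | rewrite e_sym].
  have -> : i = i.-1.+1 by lia.
  by apply: (pathP x pe); lia.
Qed.

Lemma shortest_path_in_module_inj S M x p :
  shortest_path_in S x p -> is_module e S M -> 3 <= size p ->
  ~~ all (fun y => y \in M) (x :: p) ->
  {in x :: p &, forall y z, y \in M -> z \in M -> y = z}.
Proof.
move=> sp modM p3 pM y z yp zp.
wlog yz : y z yp zp / index y (x :: p) < index z (x :: p).
  move=> wlog_lt yM zM.
  case: (ltngtP (index y (x :: p)) (index z (x :: p))) => [yz | zy | eq_yz].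
  - exact: wlog_lt.
  - by apply/esym/wlog_lt.
  - by rewrite -(nth_index x yp) eq_yz nth_index.
move=> yM; apply/contraTeq => _.
have zp' : index z (x :: p) <= size p by rewrite -ltnS index_mem.
rewrite -(nth_index x zp).
apply: (shortest_path_in_module sp modM p3 pM (i := index y (x :: p))).
  by rewrite yz zp'.
by rewrite nth_index.
Qed.

Lemma mw_le_shortest_path_in w S x p :
  mw_le e w S -> shortest_path_in S x p -> size p <= w.
Proof.
move=> mwS; elim: mwS x p => {S} [S Sw | S P partP Pw modP _ IH] x p sp.
  exact: ltnW (leq_trans (shortest_path_in_card sp) Sw).
have [/eqP coverP trivP _] := and3P partP.
have [pS _ p_uniq _] := sp.
have p_cover : {subset x :: p <= cover P} by move=> y /(allP pS); rewrite coverP.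
set B := pblock P x; have BP : B \in P by rewrite pblock_mem ?p_cover ?mem_head.
have [pB | /allPn[y yp yB]] := boolP (all (fun y => y \in B) (x :: p)).
  apply: (IH B BP); apply: shortest_path_in_sub pB sp.
  by have [] := modP B BP.
have P2 : 1 < #|P|.
  apply/card_gt1P; exists B, (pblock P y); rewrite BP pblock_mem ?p_cover //.
  by split=> //; apply: contraNneq yB => ->; rewrite mem_pblock p_cover.
have [p2 | p3] := leqP (size p) 2; first exact: leq_trans p2 (leq_trans P2 Pw).
apply/(leq_trans _ Pw)/ltnW; apply: (size_leq_card_pblock p_uniq p_cover).
move=> y1 y2 y1p y2p eq_y12; set C := pblock P y1.
have CP : C \in P := pblock_mem (p_cover _ y1p).
apply: (shortest_path_in_module_inj sp (modP C CP) p3 _ y1p y2p).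
- apply: contra yB => pC; suff -> : B = C by apply: (allP pC).
  by rewrite /B (def_pblock trivP CP) // (allP pC) ?mem_head.
- by rewrite mem_pblock p_cover.
- by rewrite /C eq_y12 mem_pblock p_cover.
Qed.

End ShortestPaths.

Theorem proposition27 (T : finType) (e : rel T) (w : nat) :
  simple_graph e -> 1 <= w -> mw_graph_le e w ->
  (forall (x : T) (p : seq T), shortest_path e x p -> size p <= w) /\
  (w < #|T| ->
   forall P : {set {set T}}, modular_decomposition e w P ->
   forall (x : T) (p : seq T), shortest_path e x p -> 3 <= size p ->
     (exists2 V, V \in P & all (fun y => y \in V) (x :: p)) \/
     (forall V, V \in P -> count (fun y => y \in V) (x :: p) <= 1)).
Proof.
move=> [e_sym _] _ mwT; split=> [x p /shortest_path_in_setT | _ P [_ [_ [_ [modP _]]]]].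
  exact: mw_le_shortest_path_in mwT.
move=> x p /shortest_path_in_setT sp p3.
case: (pickP (fun V => (V \in P) && all (fun y => y \in V) (x :: p))).
  by move=> V /andP[VP pV]; left; exists V.
move=> none; right=> V VP.
have [_ _ p_uniq _] := sp; apply: (count_le1_in p_uniq).
apply: (shortest_path_in_module_inj e_sym sp (modP V VP) p3).
by move: (none V); rewrite /= VP => /negbT.
Qed.
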